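(* Let $r\ge0$ be an integer and let $B(x,y)$ be a $q$-quasi-polynomial in $x$ and $y$ of degree $d$, i.e. a linear combination of terms $[x;q]_m[y;q]_n\rho_1^x\rho_2^y$ with $m+n\le d$ and $\rho_1,\rho_2$ roots of unity. Then $D(r,B)(x,y)$ is a $q$-quasi-polynomial of degree at most $2r+d$ in $x$ and $y$ (i.e. a linear combination of such terms with $m+n\le 2r+d$).
   Context: $q$ is an indeterminate; $[x;q]=(1-q^x)/(1-q)$, $[x;q]_m=\prod_{i=0}^{m-1}[x+i;q]$; coefficients of the linear combinations may be rational functions of $q$. Sums use the convention: $\sum_{i=a}^bf(i)=f(a)+\cdots+f(b)$ if $a\le b$, $0$ if $b=a-1$, and $-f(b+1)-\cdots-f(a-1)$ if $b+1\le a-1$. $D(0,B)=B$ and $D(r,B)(x,y)=\sum_{x'=x+1}^{y+1}\sum_{y'=x}^{y}D(r-1,B)(x',y')\,q^{x'+y'}$. *)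

From HB Require Import structures.
From mathcomp Require Import all_boot all_order all_algebra.
From mathcomp Require Import algC.
Set Implicit Arguments. Unset Strict Implicit. Unset Printing Implicit Defensive.
Import Order.TTheory GRing.Theory Num.Theory.
Local Open Scope ring_scope.

(* Field of rational functions in the indeterminate q over the algebraic
   complex numbers algC (which contain all roots of unity). *)
Definition Fq : fieldType := {fraction {poly algC}}.

Definition qv : Fq := tofrac ('X : {poly algC}).

Definition cst (a : algC) : Fq := tofrac (a%:P).

Definition qbr (x : int) : Fq := (1 - qv ^ x) / (1 - qv).

Definition qpoch (x : int) (m : nat) : Fq := \prod_(i < m) qbr (x + i%:Z).

(* Signed sum convention: sum_{i=a}^b f i = f a + ... + f b if a <= b,
   0 if b = a-1, and -(f (b+1) + ... + f (a-1)) if b+1 <= a-1. *)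
Definition isum (a b : int) (f : int -> Fq) : Fq :=
  if (a <= b)%R then \sum_(k < absz (b - a + 1)%R) f (a + k%:Z)
  else - \sum_(k < absz (a - 1 - b)%R) f (b + 1 + k%:Z).

Fixpoint Dop (r : nat) (B : int -> int -> Fq) : int -> int -> Fq :=
  match r with
  | 0%N => B
  | r'.+1 => fun x y =>
      isum (x + 1) (y + 1) (fun x' =>
        isum x y (fun y' => Dop r' B x' y' * qv ^ (x' + y')))
  end.

Definition root_of_unity (a : algC) : Prop := exists k : nat, (0 < k)%N /\ a ^+ k = 1.

Definition qterm (t : Fq * nat * nat * algC * algC) (x y : int) : Fq :=
  let '(c, m, n, r1, r2) := t in
  c * qpoch x m * qpoch y n * cst r1 ^ x * cst r2 ^ y.

Definition is_qqp (d : nat) (f : int -> int -> Fq) : Prop :=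
  exists s : seq (Fq * nat * nat * algC * algC),
    (forall t, t \in s ->
       let '(c, m, n, r1, r2) := t in
       (m + n <= d)%N /\ root_of_unity r1 /\ root_of_unity r2) /\
    (forall x y, f x y = \sum_(t <- s) qterm t x y).

(* Since [x;q]_{m+1} = [x;q]_m (1 - q^m q^x)/(1 - q), each [x;q]_m is a polynomial of
   degree m in q^x; conversely q^x [x;q]_k is a combination of [x;q]_k and [x;q]_{k+1},
   so (q^a)^x is a combination of the [x;q]_k with k <= a. Hence the q-quasi-polynomials
   of degree at most d are exactly the linear combinations of the exponentials
   (q^a rho1)^x (q^b rho2)^y with a + b <= d. On such an exponential, after absorbing
   q^(x'+y'), the double sum defining D factors into two geometric sums with ratios
   w = q^(a+1) rho1 and q^(b+1) rho2; as q is transcendental, w <> 1, so each sum is a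
   combination of w^x and w^y. Thus each application of D raises the degree by 2. *)

From Pilot Require Import Defs.
From mathcomp Require Import all_boot all_order all_algebra.
From mathcomp Require Import algC.
From mathcomp Require Import zify ring.
(* poly.v also defines [root_of_unity]; re-import Defs so that the name refers to Defs. *)
Import Defs.
Set Implicit Arguments. Unset Strict Implicit. Unset Printing Implicit Defensive.
Import Order.TTheory GRing.Theory Num.Theory.
Local Open Scope ring_scope.

Section FunctionSpan.

Variable R : comPzRingType.

Definition fspan {X : Type} (G : (X -> R) -> Prop) (f : X -> R) : Prop :=
  exists s : seq (R * {g : X -> R | G g}),
    forall x, f x = \sum_(t <- s) t.1 * sval t.2 x.

Definition linear_fun {X Y : Type} (L : (X -> R) -> Y -> R) : Prop :=
  forall (I : Type) (s : seq I) (c : I -> R) (g : I -> X -> R) f,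
    f =1 (fun x => \sum_(i <- s) c i * g i x) ->
    L f =1 (fun y => \sum_(i <- s) c i * L (g i) y).

Lemma eq_fspan {X : Type} (G : (X -> R) -> Prop) (f g : X -> R) :
  f =1 g -> fspan G g -> fspan G f.
Proof. by move=> fg [s Hs]; exists s => x; rewrite fg Hs. Qed.

Lemma fspan_gen {X : Type} (G : (X -> R) -> Prop) (g : X -> R) : G g -> fspan G g.
Proof.
by move=> Gg; exists [:: (1, exist G g Gg)] => x; rewrite big_seq1 mul1r.
Qed.

Lemma fspanD {X : Type} (G : (X -> R) -> Prop) (f g : X -> R) :
  fspan G f -> fspan G g -> fspan G (fun x => f x + g x).
Proof. by move=> [s Hs] [s' Hs']; exists (s ++ s') => x; rewrite big_cat Hs Hs'. Qed.

Lemma fspanZ {X : Type} (G : (X -> R) -> Prop) (c : R) (f : X -> R) :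
  fspan G f -> fspan G (fun x => c * f x).
Proof.
move=> [s Hs]; exists [seq (c * t.1, t.2) | t <- s] => x.
by rewrite Hs big_map mulr_sumr; apply: eq_bigr => t _; rewrite mulrA.
Qed.

Lemma fspan_lincomb {X I : Type} (G : (X -> R) -> Prop) (s : seq I) (c : I -> R)
    (g : I -> X -> R) :
  (forall i, fspan G (g i)) -> fspan G (fun x => \sum_(i <- s) c i * g i x).
Proof.
move=> Gg; elim: s => [|i s IHs]; first by exists [::] => x; rewrite !big_nil.
by apply: eq_fspan (fspanD (fspanZ (c i) (Gg i)) IHs) => x; rewrite big_cons.
Qed.

Lemma fspan_map {X Y : Type} (L : (X -> R) -> Y -> R) (G : (X -> R) -> Prop)
    (H : (Y -> R) -> Prop) (f : X -> R) :
  linear_fun L -> (forall g, G g -> fspan H (L g)) -> fspan G f -> fspan H (L f).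
Proof.
move=> linL LG [s Hs].
apply: eq_fspan (linL _ s (fun t => t.1) (fun t => sval t.2) _ Hs) _.
by apply: fspan_lincomb => t; apply: LG; case: t.2.
Qed.

Lemma fspan_trans {X : Type} (G H : (X -> R) -> Prop) (f : X -> R) :
  (forall g, G g -> fspan H g) -> fspan G f -> fspan H f.
Proof. exact: (@fspan_map _ _ id). Qed.

Lemma sub_fspan {X : Type} (G H : (X -> R) -> Prop) (f : X -> R) :
  (forall g, G g -> H g) -> fspan G f -> fspan H f.
Proof. by move=> GH; apply: fspan_trans => g /GH /fspan_gen. Qed.

Lemma fspan_comp {X Y : Type} (phi : Y -> X) (G : (X -> R) -> Prop)
    (H : (Y -> R) -> Prop) (f : X -> R) :
  (forall g, G g -> H (g \o phi)) -> fspan G f -> fspan H (f \o phi).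
Proof.
move=> Gphi; apply: (fspan_map (L := fun g => g \o phi)) => [I s c g h Hh y|].
  exact: Hh.
by move=> g /Gphi/fspan_gen.
Qed.

Lemma fspan_mull {X : Type} (h : X -> R) (G H : (X -> R) -> Prop) (f : X -> R) :
  (forall g, G g -> fspan H (fun x => h x * g x)) ->
  fspan G f -> fspan H (fun x => h x * f x).
Proof.
apply: fspan_map => I s c g f' Hf x.
by rewrite Hf mulr_sumr; apply: eq_bigr => i _; rewrite mulrCA.
Qed.

Lemma fspan_mul {X : Type} (G H K : (X -> R) -> Prop) (f g : X -> R) :
  (forall g h, G g -> H h -> fspan K (fun x => g x * h x)) ->
  fspan G f -> fspan H g -> fspan K (fun x => f x * g x).
Proof.
move=> GHK Gf; apply: fspan_mull => h Hh.
apply: eq_fspan (fspan_mull _ Gf) => [x|g' Gg']; first exact: mulrC.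
by apply: eq_fspan (GHK _ _ Gg' Hh) => x; rewrite mulrC.
Qed.

End FunctionSpan.

Lemma root_of_unity1 : root_of_unity 1.
Proof. by exists 1%N; rewrite expr1n. Qed.

Lemma root_of_unityM r s :
  root_of_unity r -> root_of_unity s -> root_of_unity (r * s).
Proof.
move=> [k [k_gt0 rk]] [l [l_gt0 sl]].
exists (k * l)%N; split; first by rewrite muln_gt0 k_gt0.
by rewrite exprMn exprM rk expr1n mulnC exprM sl expr1n mulr1.
Qed.

Lemma root_of_unity_neq0 r : root_of_unity r -> r != 0.
Proof.
move=> [[|k] [//= _ rk]]; apply: contra_eq_neq rk => ->.
by rewrite expr0n eq_sym oner_neq0.
Qed.

Definition qbase (a : nat) (r : algC) : Fq := qv ^+ a * cst r.

Lemma qbase_tofrac a r : qbase a r = tofrac ('X^a * r%:P).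
Proof. by rewrite /qbase /qv /cst rmorphM rmorphXn. Qed.

Lemma qbase_neq0 a r : r != 0 -> qbase a r != 0.
Proof.
move=> r_neq0; rewrite qbase_tofrac tofrac_eq0 mulf_eq0 negb_or polyC_eq0 r_neq0.
by rewrite expf_neq0 // polyX_eq0.
Qed.

Lemma qbase_neq1 a r : (0 < a)%N -> qbase a r != 1.
Proof.
move=> a_gt0; rewrite qbase_tofrac -(rmorph1 (@tofrac _)) tofrac_eq.
apply/eqP => /(congr1 (horner^~ 0)).
rewrite hornerM hornerXn !hornerC expr0n eqn0Ngt a_gt0 mul0r => /eqP.
by rewrite eq_sym oner_eq0.
Qed.

Lemma qbase0 r : qbase 0 r = cst r.
Proof. by rewrite /qbase expr0 mul1r. Qed.

Lemma qbase1 a : qbase a 1 = qv ^+ a.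
Proof. by rewrite /qbase /cst rmorph1 mulr1. Qed.

Lemma qbaseM a b r s : qbase a r * qbase b s = qbase (a + b) (r * s).
Proof. by rewrite /qbase /cst !rmorphM exprD; ring. Qed.

Lemma qv_neq0 : qv != 0.
Proof. by have := @qbase_neq0 1 1 (oner_neq0 _); rewrite qbase1 expr1. Qed.

Lemma subr1qv_neq0 : 1 - qv != 0.
Proof.
by rewrite subr_eq0 eq_sym; have := @qbase_neq1 1 1 isT; rewrite qbase1 expr1.
Qed.

Lemma eq_isum a b f g : (forall k, f k = g k) -> isum a b f = isum a b g.
Proof. by move=> fg; rewrite /isum; case: ifP => _; under eq_bigr do rewrite fg. Qed.

Lemma isum_mull a b c f : isum a b (fun k => c * f k) = c * isum a b f.
Proof. by rewrite /isum; case: ifP => _; rewrite ?mulrN mulr_sumr. Qed.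

Lemma isum_sum (I : Type) (s : seq I) a b (F : I -> int -> Fq) :
  isum a b (fun k => \sum_(i <- s) F i k) = \sum_(i <- s) isum a b (F i).
Proof. by rewrite /isum; case: ifP => _; rewrite exchange_big // sumrN. Qed.

Lemma isum_telescope a b (F : int -> Fq) :
  isum a b (fun k => F (k + 1) - F k) = F (b + 1) - F a.
Proof.
have tele c n : \sum_(k < n) (F (c + k%:Z + 1) - F (c + k%:Z)) = F (c + n%:Z) - F c.
  rewrite -(big_mkord xpredT (fun k => F (c + k%:Z + 1) - F (c + k%:Z))).
  rewrite (telescope_sumr_eq (fun k => F (c + k%:Z))) ?addr0 // => k _.
  by congr (F _ - _); lia.
rewrite /isum; case: ifP => ab.
  by rewrite tele; congr (F _ - _); lia.
by rewrite tele opprB; congr (_ - F _); lia.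
Qed.

Lemma isum_geom a b (w : Fq) : w != 0 -> w != 1 ->
  isum a b (fun k => w ^ k) = (w ^ (b + 1) - w ^ a) / (w - 1).
Proof.
move=> w_neq0 w_neq1; have w1_neq0 : w - 1 != 0 by rewrite subr_eq0.
rewrite mulrBl -(isum_telescope _ _ (fun k => w ^ k / (w - 1))); apply: eq_isum => k.
by rewrite expfzDr // expr1z -mulrBl -[X in _ * _ - X]mulr1 -mulrBr mulfK.
Qed.

Definition qexp_term (d : nat) (g : int * int -> Fq) : Prop :=
  exists a b r1 r2, [/\ (a + b <= d)%N, root_of_unity r1, root_of_unity r2 &
    g =1 (fun p => qbase a r1 ^ p.1 * qbase b r2 ^ p.2)].

Lemma qexp_term_mono d e g : (d <= e)%N -> qexp_term d g -> qexp_term e g.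
Proof.
move=> le_de [a [b [r1 [r2 [le_abd ? ? Eg]]]]].
by exists a, b, r1, r2; split=> //; apply: leq_trans le_de.
Qed.

Lemma qexp_term_swap d g : qexp_term d g -> qexp_term d (fun p => g (p.2, p.1)).
Proof.
move=> [a [b [r1 [r2 [le_abd ? ? Eg]]]]].
exists b, a, r2, r1.
split; [by rewrite addnC | by [] | by [] | by move=> p; rewrite Eg mulrC].
Qed.

Lemma qexp_termM d e g h :
  qexp_term d g -> qexp_term e h -> qexp_term (d + e) (fun p => g p * h p).
Proof.
move=> [a [b [r1 [r2 [le_abd r1_rou r2_rou Eg]]]]].
move=> [a' [b' [r1' [r2' [le_abe r1'_rou r2'_rou Eh]]]]].
exists (a + a')%N, (b + b')%N, (r1 * r1'), (r2 * r2'); split.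
- by rewrite addnACA leq_add.
- exact: root_of_unityM.
- exact: root_of_unityM.
- by move=> p; rewrite Eg Eh -!qbaseM !expfzMl mulrACA.
Qed.

Lemma qexp_term_x a r : root_of_unity r -> qexp_term a (fun p => qbase a r ^ p.1).
Proof.
move=> r_rou; exists a, 0%N, r, 1.
split; [by rewrite addn0 | by [] | exact: root_of_unity1 | move=> p].
by rewrite qbase1 expr0 exp1rz mulr1.
Qed.

Lemma qexp_term_y a r : root_of_unity r -> qexp_term a (fun p => qbase a r ^ p.2).
Proof. by move/(qexp_term_x a)/qexp_term_swap. Qed.

Lemma fspan_qexp_mono d e f :
  (d <= e)%N -> fspan (qexp_term d) f -> fspan (qexp_term e) f.
Proof. by move=> le_de; apply: sub_fspan => g; apply: qexp_term_mono. Qed.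

Lemma fspan_qexpM d e f g : fspan (qexp_term d) f -> fspan (qexp_term e) g ->
  fspan (qexp_term (d + e)) (fun p => f p * g p).
Proof. by apply: fspan_mul => g' h' Gg' Gh'; apply/fspan_gen/qexp_termM. Qed.

Lemma fspan_qexp_swap d f :
  fspan (qexp_term d) f -> fspan (qexp_term d) (fun p => f (p.2, p.1)).
Proof. by apply: (fspan_comp (phi := fun p => (p.2, p.1))) => g /qexp_term_swap. Qed.

Lemma qexp_term1 : qexp_term 0 (fun _ => 1).
Proof.
exists 0%N, 0%N, 1, 1.
split; [by [] | exact: root_of_unity1 | exact: root_of_unity1 | move=> p].
by rewrite qbase1 expr0 !exp1rz mulr1.
Qed.

Lemma qpochS x m : qpoch x m.+1 = qpoch x m * qbr (x + m%:Z).
Proof. exact: big_ord_recr. Qed.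

Lemma qbr_addn x m : qbr (x + m%:Z) = (1 - qv)^-1 - qv ^+ m / (1 - qv) * qv ^ x.
Proof.
rewrite /qbr expfzDr ?qv_neq0 //; change (qv ^ m%:Z) with (qv ^+ m).
by ring.
Qed.

Lemma fspan_qexp_qpoch m : fspan (qexp_term m) (fun p => qpoch p.1 m).
Proof.
elim: m => [|m IHm].
  by apply: eq_fspan (fspan_gen qexp_term1) => p; rewrite /qpoch big_ord0.
have qbr_span : fspan (qexp_term 1) (fun p => qbr (p.1 + m%:Z)).
  have one := fspan_gen (qexp_term_mono (leq0n 1) qexp_term1).
  have qvx := fspan_gen (qexp_term_x 1 root_of_unity1).
  apply: eq_fspan (fspanD (fspanZ (1 - qv)^-1 one)
                          (fspanZ (- (qv ^+ m / (1 - qv))) qvx)) => p.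
  by rewrite qbr_addn qbase1 expr1 mulr1 mulNr.
have := fspan_qexpM IHm qbr_span; rewrite addn1.
by apply: eq_fspan => p; apply: qpochS.
Qed.

Definition qqp_term (d : nat) (g : int * int -> Fq) : Prop :=
  exists m n r1 r2, [/\ (m + n <= d)%N, root_of_unity r1, root_of_unity r2 &
    g =1 (fun p => qterm (1, m, n, r1, r2) p.1 p.2)].

Lemma fspan_qexp_qqp_term d g : qqp_term d g -> fspan (qexp_term d) g.
Proof.
move=> [m [n [r1 [r2 [le_mnd r1_rou r2_rou Eg]]]]].
have qpochs := fspan_qexpM (fspan_qexp_qpoch m) (fspan_qexp_swap (fspan_qexp_qpoch n)).
have := fspan_qexpM (fspan_qexpM qpochs (fspan_gen (qexp_term_x 0 r1_rou)))
                   (fspan_gen (qexp_term_y 0 r2_rou)).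
rewrite !addn0 => /(fspan_qexp_mono le_mnd); apply: eq_fspan => p.
by rewrite Eg /= mul1r !qbase0.
Qed.

Lemma qqp_term_mono d e g : (d <= e)%N -> qqp_term d g -> qqp_term e g.
Proof.
move=> le_de [m [n [r1 [r2 [le_mnd ? ? Eg]]]]].
by exists m, n, r1, r2; split=> //; apply: leq_trans le_de.
Qed.

Lemma qqp_term_swap d g : qqp_term d g -> qqp_term d (fun p => g (p.2, p.1)).
Proof.
move=> [m [n [r1 [r2 [le_mnd ? ? Eg]]]]].
exists n, m, r2, r1.
split; [by rewrite addnC | by [] | by [] | by move=> p; rewrite Eg /=; ring].
Qed.

Lemma qpochS_qv x m :
  (1 - qv) * qpoch x m.+1 = qpoch x m - qv ^+ m * (qv ^ x * qpoch x m).
Proof.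
rewrite qpochS /qbr mulrCA [X in _ * X]mulrCA mulfV ?subr1qv_neq0 // mulr1.
by rewrite expfzDr ?qv_neq0 //; change (qv ^ m%:Z) with (qv ^+ m); ring.
Qed.

Lemma qqp_term_mulqv d g :
  qqp_term d g -> fspan (qqp_term d.+1) (fun p => qv ^ p.1 * g p).
Proof.
move=> [m [n [r1 [r2 [le_mnd r1_rou r2_rou Eg]]]]].
have gen k : (k <= m.+1)%N ->
    fspan (qqp_term d.+1) (fun p => qterm (1, k, n, r1, r2) p.1 p.2).
  move=> le_km; apply: fspan_gen; exists k, n, r1, r2; split=> //.
  by rewrite (leq_trans (leq_add le_km (leqnn n))) // addSn ltnS.
apply: eq_fspan (fspanD (fspanZ (qv ^+ m)^-1 (gen m (leqnSn m)))
                      (fspanZ (- ((1 - qv) / qv ^+ m)) (gen m.+1 (leqnn _)))) => p.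
rewrite Eg /= !mul1r; set Q := qpoch p.2 n * cst r1 ^ p.1 * cst r2 ^ p.2.
transitivity ((qv ^+ m)^-1 * (qpoch p.1 m - (1 - qv) * qpoch p.1 m.+1) * Q); last first.
  by rewrite /Q; ring.
rewrite qpochS_qv opprB addrC subrK mulKf ?expf_neq0 ?qv_neq0 //.
by rewrite /Q; ring.
Qed.

Lemma fspan_qqp_mono d e f :
  (d <= e)%N -> fspan (qqp_term d) f -> fspan (qqp_term e) f.
Proof. by move=> le_de; apply: sub_fspan => g; apply: qqp_term_mono. Qed.

Lemma fspan_qqp_swap d f :
  fspan (qqp_term d) f -> fspan (qqp_term d) (fun p => f (p.2, p.1)).
Proof. by apply: (fspan_comp (phi := fun p => (p.2, p.1))) => g /qqp_term_swap. Qed.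

Lemma fspan_qqp_mulqv_pow a d f : fspan (qqp_term d) f ->
  fspan (qqp_term (a + d)) (fun p => (qv ^+ a) ^ p.1 * f p).
Proof.
move=> Gf; elim: a => [|a IHa].
  by apply: eq_fspan Gf => p; rewrite expr0 exp1rz mul1r.
apply: eq_fspan (fspan_mull (qqp_term_mulqv (d := a + d)) IHa) => p.
by rewrite exprS expfzMl mulrA.
Qed.

Lemma fspan_qqp_qexp_term d g : qexp_term d g -> fspan (qqp_term d) g.
Proof.
move=> [a [b [r1 [r2 [le_abd r1_rou r2_rou Eg]]]]].
have gen0 : qqp_term 0 (fun p => cst r2 ^ p.1 * cst r1 ^ p.2).
  by exists 0%N, 0%N, r2, r1; split=> // p; rewrite /= /qpoch !big_ord0 !mul1r.
have qv_pow_y := fspan_qqp_swap (fspan_qqp_mulqv_pow b (fspan_gen gen0)).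
have := fspan_qqp_mulqv_pow a qv_pow_y.
rewrite addn0 => /(fspan_qqp_mono le_abd); apply: eq_fspan => p.
by rewrite Eg /= /qbase !expfzMl; ring.
Qed.

Lemma fspan_qqp_qexp d f : fspan (qqp_term d) f <-> fspan (qexp_term d) f.
Proof.
split; apply: fspan_trans => g.
  exact: fspan_qexp_qqp_term.
exact: fspan_qqp_qexp_term.
Qed.

(* [fun p => Dop r.+1 B p.1 p.2] is convertible to [Dstep (fun p => Dop r B p.1 p.2)]. *)
Definition Dstep (f : int * int -> Fq) (p : int * int) : Fq :=
  isum (p.1 + 1) (p.2 + 1)
    (fun x => isum p.1 p.2 (fun y => f (x, y) * qv ^ (x + y))).

Lemma linear_Dstep : linear_fun Dstep.
Proof.
move=> I s c g f Ef p.
have inner x : isum p.1 p.2 (fun y => f (x, y) * qv ^ (x + y)) =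
    \sum_(i <- s) c i * isum p.1 p.2 (fun y => g i (x, y) * qv ^ (x + y)).
  transitivity (isum p.1 p.2 (fun y => \sum_(i <- s) c i * (g i (x, y) * qv ^ (x + y)))).
    by apply: eq_isum => y; rewrite Ef mulr_suml; apply: eq_bigr => i _; rewrite mulrA.
  by rewrite isum_sum; apply: eq_bigr => i _; apply: isum_mull.
rewrite /Dstep (eq_isum _ _ inner) isum_sum; apply: eq_bigr => i _; apply: isum_mull.
Qed.

Lemma qbaseS_expz a r k : qbase a.+1 r ^ k = qbase a r ^ k * qv ^ k.
Proof. by rewrite -expfzMl /qbase exprS; congr (_ ^ _); ring. Qed.

Lemma fspan_qexp_isum_geom a r i j : root_of_unity r ->
  fspan (qexp_term a.+1)
    (fun p => isum (p.1 + i) (p.2 + j) (fun k => qbase a.+1 r ^ k)).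
Proof.
move=> r_rou; have wx := fspan_gen (qexp_term_x a.+1 r_rou).
have wy := fspan_gen (qexp_term_y a.+1 r_rou).
have w_neq0 : qbase a.+1 r != 0 by rewrite qbase_neq0 ?root_of_unity_neq0.
set w := qbase a.+1 r in wx wy w_neq0 *.
apply: eq_fspan (fspanD (fspanZ (w ^ (j + 1) / (w - 1)) wy)
                        (fspanZ (- (w ^ i / (w - 1))) wx)) => p.
rewrite isum_geom ?qbase_neq1 // -addrA.
by rewrite (expfzDr p.2 (j + 1) w_neq0) (expfzDr p.1 i w_neq0); ring.
Qed.

Lemma qexp_term_Dstep d g : qexp_term d g -> fspan (qexp_term d.+2) (Dstep g).
Proof.
move=> [a [b [r1 [r2 [le_abd r1_rou r2_rou Eg]]]]].
have le_ab2 : (a.+1 + b.+1 <= d.+2)%N by rewrite addSn addnS.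
apply: (fspan_qexp_mono le_ab2).
apply: eq_fspan (fspan_qexpM (fspan_qexp_isum_geom a 1 1 r1_rou)
                             (fspan_qexp_isum_geom b 0 0 r2_rou)) => p.
rewrite /Dstep !addr0 [RHS]mulrC -isum_mull; apply: eq_isum => x.
rewrite [RHS]mulrC -isum_mull; apply: eq_isum => y.
by rewrite Eg /= expfzDr ?qv_neq0 // !qbaseS_expz; ring.
Qed.

Lemma fspan_qexp_Dstep d f :
  fspan (qexp_term d) f -> fspan (qexp_term d.+2) (Dstep f).
Proof. by apply: fspan_map; [apply: linear_Dstep | apply: qexp_term_Dstep]. Qed.

Lemma fspan_qexp_Dop r d B : fspan (qexp_term d) (fun p => B p.1 p.2) ->
  fspan (qexp_term (2 * r + d)) (fun p => Dop r B p.1 p.2).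
Proof.
move=> GB; elim: r => [|r IHr] //.
by rewrite mulnS; apply: fspan_qexp_Dstep IHr.
Qed.

Lemma is_qqp_fspan d f : is_qqp d f <-> fspan (qqp_term d) (fun p => f p.1 p.2).
Proof.
split=> [[s [Hs Ef]]|[s Ef]].
  apply: (eq_fspan (g := fun p => \sum_(t <- s) qterm t p.1 p.2)) => [p|].
    exact: Ef.
  elim: s Hs {Ef} => [|[[[[c m] n] r1] r2] s IHs] Hs.
    by exists [::] => p; rewrite !big_nil.
  have [le_mnd [r1_rou r2_rou]] := Hs _ (mem_head _ s).
  have gen : qqp_term d (fun p => qterm (1, m, n, r1, r2) p.1 p.2) by exists m, n, r1, r2.
  have tail_span : fspan (qqp_term d) (fun p => \sum_(t <- s) qterm t p.1 p.2).
    by apply: IHs => t st; apply: Hs; rewrite inE st orbT.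
  apply: eq_fspan (fspanD (fspanZ c (fspan_gen gen)) tail_span) => p.
  by rewrite big_cons /= !mulrA mulr1.
elim: s f Ef => [|[c [g Gg]] s IHs] f Ef.
  by exists [::]; split=> // x y; rewrite (Ef (x, y)) !big_nil.
have [s' [Hs' Es']] : is_qqp d (fun x y => \sum_(t <- s) t.1 * sval t.2 (x, y)).
  by apply: IHs => -[].
have [m [n [r1 [r2 [le_mnd r1_rou r2_rou Eg]]]]] := Gg.
exists ((c, m, n, r1, r2) :: s'); split.
  by move=> t; rewrite inE => /predU1P [-> //|/Hs'].
by move=> x y; rewrite (Ef (x, y)) !big_cons Es' /= Eg /= !mulrA mulr1.
Qed.

Theorem lemma14 (r d : nat) (B : int -> int -> Fq) :
  is_qqp d B -> is_qqp (2 * r + d) (Dop r B).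
Proof.
by move=> /is_qqp_fspan/fspan_qqp_qexp/(fspan_qexp_Dop r)/fspan_qqp_qexp/is_qqp_fspan.
Qed.
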